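(* Let $\mathcal{M}=\mathbb{C}^{3\times 3}$. The coordinate functions of the polynomial maps $c_3$ and $c_4$ are contained in the $\mathbb{C}$-linear span (inside $\mathbb{C}[\mathcal{M}]$) of the coordinate functions of $\mathcal{P}_1:\mathcal{M}\to\bigwedge^3\mathcal{M}$, $A\mapsto I_3\wedge A\wedge A^2$.
   Context: $c_3:\mathbb{C}^{3\times 3}\to\mathrm{S}^3(\mathbb{C}^3)^\star$ (homogeneous cubic forms on $\mathbb{C}^3$) sends $A$ to the cubic form $\underline{x}\mapsto\det(\underline{x}\,|\,A\underline{x}\,|\,A^2\underline{x})$ (the $3\times 3$ matrix with columns $\underline{x},A\underline{x},A^2\underline{x}$). $c_4:\mathbb{C}^{3\times 3}\to\mathrm{S}^3(\mathbb{C}^3)$ (homogeneous cubic forms on row vectors) sends $A$ to the cubic form $\underline{x}^T\mapsto\det$ of the $3\times 3$ matrix with rows $\underline{x}^T,\underline{x}^TA,\underline{x}^TA^2$. Coordinate functions of $c_3,c_4$ are the coefficients of the monomials of these cubic forms, viewed as polynomial functions of $A$; coordinate functions of $\mathcal{P}_1$ are taken with respect to a basis of $\bigwedge^3\mathbb{C}^{3\times3}$ (e.g. the $3\times 3$ minors of the $9\times 3$ matrix whose columns are the entries of $I_3$, $A$, $A^2$). *)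

From HB Require Import structures.
From mathcomp Require Import all_boot all_order all_algebra.
From mathcomp Require Import Rstruct.
From mathcomp Require Import complex.
From mathcomp Require Import mpoly.
Set Implicit Arguments. Unset Strict Implicit. Unset Printing Implicit Defensive.
Import GRing.Theory.
Local Open Scope ring_scope.

Definition C : Type := complex Rdefinitions.R.
HB.instance Definition _ := GRing.Field.on C.

(* c_3(A) : the cubic form x |-> det(x | A x | A^2 x), as a polynomial in
   x = ('X_0, 'X_1, 'X_2); column j is A^j x. *)
Definition c3 (A : 'M[C]_3) : {mpoly C[3]} :=
  \det (\matrix_(i < 3, j < 3) \sum_(k < 3) ((A ^+ j) i k)%:MP * 'X_k).

(* c_4(A) : the cubic form x^T |-> det of the matrix with rows
   x^T, x^T A, x^T A^2; row i is x^T A^i. *)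
Definition c4 (A : 'M[C]_3) : {mpoly C[3]} :=
  \det (\matrix_(i < 3, j < 3) \sum_(k < 3) 'X_k * ((A ^+ i) k j)%:MP).

Definition P1mx (A : 'M[C]_3) : 'M[C]_(3 * 3, 3) :=
  \matrix_(k < 3 * 3, j < 3) mxvec (A ^+ j) 0 k.

Definition incr3 (r : {ffun 'I_3 -> 'I_(3 * 3)}) : bool :=
  [forall i : 'I_3, forall j : 'I_3, (i < j)%N ==> (r i < r j)%N].

(* Coordinate functions of P_1(A) = I_3 /\ A /\ A^2 in the standard basis of
   /\^3 C^{3x3}: the 3x3 minors of P1mx A (rows r 0 < r 1 < r 2). *)
Definition P1coord (r : {ffun 'I_3 -> 'I_(3 * 3)}) (A : 'M[C]_3) : C :=
  \det (rowsub r (P1mx A)).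

From mathcomp Require Import all_boot all_algebra all_fingroup mpoly zify.
Set Implicit Arguments. Unset Strict Implicit. Unset Printing Implicit Defensive.
Import GRing.Theory.
Local Open Scope ring_scope.

(* The columns x, A x, A^2 x of c_3(A) are obtained from the 9 x 3 matrix
   P(A) listing the entries of I_3, A, A^2 by a fixed 3 x 9 matrix E of linear
   forms in x: c_3(A) = det (E P(A)), and similarly for c_4 after
   transposition.  Expanding det (E P(A)) multilinearly in the rows writes it as
   a sum, over all maps f : 3 -> 9, of a product of entries of E times the minor
   of P(A) on the rows f.  Such a minor is zero when f is not injective and
   otherwise equals, up to sign, the minor on the sorted rows, which is a
   coordinate of I_3 /\ A /\ A^2.  Extracting the coefficient of a monomial
   therefore yields a linear combination of these coordinates with coefficients
   independent of A. *)

Lemma det_mulmx_rowsub (R : comPzRingType) n p (X : 'M[R]_(n, p)) (Y : 'M[R]_(p, n)) :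
  \det (X *m Y) =
  \sum_(f : {ffun 'I_n -> 'I_p}) (\prod_i X i (f i)) * \det (rowsub f Y).
Proof.
transitivity (\sum_(s : 'S_n) \sum_(f : {ffun 'I_n -> 'I_p})
   (-1) ^+ s * ((\prod_i X i (f i)) * \prod_i Y (f i) (s i))).
  apply: eq_bigr => s _; rewrite -big_distrr /=; congr (_ * _).
  under eq_bigr do rewrite mxE.
  rewrite (bigA_distr_bigA (fun i k => X i k * Y k (s i))) /=.
  by apply: eq_bigr => f _; rewrite big_split.
rewrite exchange_big; apply: eq_bigr => f _ /=.
rewrite /determinant big_distrr; apply: eq_bigr => s _ /=.
rewrite mulrCA; congr (_ * (_ * _)); apply: eq_bigr => i _.
by rewrite mxE.
Qed.

Lemma det_rowsub_perm (R : comPzRingType) n p (f : {ffun 'I_n -> 'I_p}) (s : 'S_n)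
    (M : 'M[R]_(p, n)) :
  \det (rowsub [ffun i => f (s i)] M) = (-1) ^+ s * \det (rowsub f M).
Proof.
have -> : rowsub [ffun i => f (s i)] M = perm_mx s *m rowsub f M.
  by rewrite -row_permE; apply/matrixP => i j; rewrite !mxE ffunE.
by rewrite det_mulmx det_perm.
Qed.

Lemma det_rowsub_eq0 (R : comPzRingType) n p (f : 'I_n -> 'I_p) i j (M : 'M[R]_(p, n)) :
  i != j -> f i = f j -> \det (rowsub f M) = 0.
Proof. by move=> ij fij; apply: (determinant_alternate ij) => k; rewrite !mxE fij. Qed.

(* At n = 3, p = 9 this is [incr3], definitionally. *)
Definition increasing n p (r : {ffun 'I_n -> 'I_p}) : bool :=
  [forall i : 'I_n, forall j : 'I_n, (i < j)%N ==> (r i < r j)%N].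

Definition ord3_0 : 'I_3 := @Ordinal 3 0 isT.
Definition ord3_1 : 'I_3 := @Ordinal 3 1 isT.
Definition ord3_2 : 'I_3 := @Ordinal 3 2 isT.

Lemma ord3P (P : 'I_3 -> Prop) : P ord3_0 -> P ord3_1 -> P ord3_2 -> forall i, P i.
Proof.
by move=> P0 P1 P2 [[|[|[|//]]] lti]; rewrite (bool_irrelevance lti isT).
Qed.

Lemma increasing3E p (r : {ffun 'I_3 -> 'I_p}) :
  increasing r = (r ord3_0 < r ord3_1 < r ord3_2)%N.
Proof.
apply/forallP/andP => [r_incr | [r01 r12]].
  by split; apply: (implyP (forallP (r_incr _) _)).
have r02 := ltn_trans r01 r12.
by elim/ord3P; apply/forallP; elim/ord3P; apply/implyP.
Qed.

Lemma exists_increasing_perm3 p (f : {ffun 'I_3 -> 'I_p}) :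
  injective f -> exists s : 'S_3, increasing [ffun i => f (s i)].
Proof.
move=> f_inj.
have f_neq i j : i != j -> (f i : nat) != f j.
  by apply: contra => /eqP /ord_inj /f_inj ->.
move: (f_neq ord3_0 ord3_1 isT) (f_neq ord3_1 ord3_2 isT) (f_neq ord3_0 ord3_2 isT).
rewrite !neq_ltn => /orP[] ? /orP[] ? /orP[] ?;
  first [ by exists 1%g; rewrite increasing3E !ffunE !perm1; lia
        | by exists (tperm ord3_0 ord3_1); rewrite increasing3E !ffunE !permE /=; lia
        | by exists (tperm ord3_1 ord3_2); rewrite increasing3E !ffunE !permE /=; lia
        | by exists (tperm ord3_0 ord3_2); rewrite increasing3E !ffunE !permE /=; lia
        | by exists ((tperm ord3_0 ord3_1 * tperm ord3_1 ord3_2)%g);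
             rewrite increasing3E !ffunE !permM !permE /=; lia
        | by exists ((tperm ord3_1 ord3_2 * tperm ord3_0 ord3_1)%g);
             rewrite increasing3E !ffunE !permM !permE /=; lia
        | lia ].
Qed.

Lemma det_rowsub_span_increasing (R : comPzRingType) p (f : {ffun 'I_3 -> 'I_p}) :
  exists c : {ffun 'I_3 -> 'I_p} -> R, forall M : 'M[R]_(p, 3),
    \det (rowsub f M) = \sum_(r | increasing r) c r * \det (rowsub r M).
Proof.
have [/injectiveP f_inj | /injectivePn[i [j ij fij]]] := boolP (injectiveb f); last first.
  exists (fun=> 0) => M; rewrite (det_rowsub_eq0 _ ij fij).
  by rewrite big1 // => r _; rewrite mul0r.
have [s fs_incr] := exists_increasing_perm3 f_inj.
exists (fun r => (-1) ^+ s * (r == [ffun i => f (s i)])%:R) => M.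
rewrite (bigD1 _ fs_incr) /= eqxx mulr1 big1 ?addr0 => [|r /andP[_ /negbTE ->]].
  by rewrite det_rowsub_perm signrMK.
by rewrite mulr0 mul0r.
Qed.

Lemma mcoeff_det_mulmx_span (R : comNzRingType) n p (E : 'M[{mpoly R[n]}]_(3, p))
    (m : 'X_{1..n}) :
  exists lam : {ffun 'I_3 -> 'I_p} -> R, forall Y : 'M[R]_(p, 3),
    (\det (E *m map_mx (@mpolyC n R) Y))@_m =
      \sum_(r | increasing r) lam r * \det (rowsub r Y).
Proof.
have [c c_span] := fin_all_exists (@det_rowsub_span_increasing R p).
exists (fun r => \sum_(f : {ffun 'I_3 -> 'I_p}) (\prod_i E i (f i))@_m * c f r) => Y.
rewrite det_mulmx_rowsub raddf_sum.
under eq_bigr do rewrite -map_mxsub det_map_mx /= mulrC mcoeffCM c_span big_distrl.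
rewrite exchange_big; apply: eq_bigr => r _ /=.
by rewrite big_distrl; apply: eq_bigr => f _; rewrite mulrC mulrA.
Qed.

Definition sel_mx (R : nzRingType) n p (e : 'I_n -> 'I_n -> 'I_p) :
    'M[{mpoly R[n]}]_(n, p) :=
  \matrix_(i, k) \sum_(q < n) (if k == e i q then 'X_q else 0).
Arguments sel_mx {R n p} e.

Lemma sel_mx_mulmx (R : nzRingType) n p k (e : 'I_n -> 'I_n -> 'I_p) (Y : 'M[R]_(p, k)) :
  sel_mx e *m map_mx (@mpolyC n R) Y =
    \matrix_(i, j) \sum_(q < n) 'X_q * (Y (e i q) j)%:MP.
Proof.
apply/matrixP => i j; rewrite !mxE.
under eq_bigr do rewrite !mxE big_distrl.
rewrite exchange_big; apply: eq_bigr => q _ /=.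
under eq_bigr do rewrite (fun_if (fun x => x * _)) mul0r.
by rewrite -big_mkcond big_pred1_eq.
Qed.

Lemma c3E (A : 'M[C]_3) :
  c3 A = \det (sel_mx (@mxvec_index 3 3) *m map_mx (@mpolyC 3 C) (P1mx A)).
Proof.
rewrite sel_mx_mulmx; congr (\det _); apply/matrixP => i j; rewrite !mxE.
by apply: eq_bigr => q _; rewrite mxE mxvecE mulrC.
Qed.

Lemma c4E (A : 'M[C]_3) :
  c4 A = \det (sel_mx (fun i q => mxvec_index q i) *m map_mx (@mpolyC 3 C) (P1mx A)).
Proof.
rewrite -det_tr sel_mx_mulmx; congr (\det _); apply/matrixP => i j; rewrite !mxE.
by apply: eq_bigr => q _; rewrite mxE mxvecE.
Qed.

Theorem proposition4p3 :
  forall m : 'X_{1..3},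
    (exists lam : {ffun 'I_3 -> 'I_(3 * 3)} -> C,
       forall A : 'M[C]_3,
         (c3 A)@_m = \sum_(r | incr3 r) lam r * P1coord r A) /\
    (exists lam : {ffun 'I_3 -> 'I_(3 * 3)} -> C,
       forall A : 'M[C]_3,
         (c4 A)@_m = \sum_(r | incr3 r) lam r * P1coord r A).
Proof.
move=> m; split.
  have [lam lam_span] := mcoeff_det_mulmx_span (@sel_mx C 3 _ (@mxvec_index 3 3)) m.
  by exists lam => A; rewrite c3E lam_span.
have [lam lam_span] :=
  mcoeff_det_mulmx_span (@sel_mx C 3 _ (fun i q => mxvec_index q i)) m.
by exists lam => A; rewrite c4E lam_span.
Qed.
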